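(* Let $\mathcal{Q}=(X,\mathcal{R},C)$ be a chemical reaction system with food set $F\subseteq X$, and let $(X_1,\mathcal{R}_1),\dots,(X_k,\mathcal{R}_k)$ be inhibition pairs with $X_i\subseteq X$, $\mathcal{R}_i\subseteq\mathcal{R}$. For every subset $J\subseteq[k]$, if $s(\mathcal{R}^J\cap\mathcal{R}_J)$ is non-empty, then $s(\mathcal{R}^J\cap\mathcal{R}_J)$ is a $u$-RAF.
   Context: A chemical reaction system (CRS) $\mathcal{Q}=(X,\mathcal{R},C)$ consists of a finite set $X$ of molecule types, a finite set $\mathcal{R}$ of reactions, each reaction $r$ having a set of reactants $\rho(r)\subseteq X$ and a set of products $\pi(r)\subseteq X$, and a catalysis set $C\subseteq X\times\mathcal{R}$ ($(x,r)\in C$ means $x$ catalyzes $r$); a food set $F\subseteq X$ is given. For $\mathcal{R}'\subseteq\mathcal{R}$, the closure $\mathrm{cl}_{\mathcal{R}'}(F)$ is the smallest set $W\subseteq X$ with $F\subseteq W$ such that $\pi(r)\subseteq W$ for every $r\in\mathcal{R}'$ with $\rho(r)\subseteq W$. A set $\mathcal{R}'\subseteq\mathcal{R}$ is an RAF if it is non-empty and every $r\in\mathcal{R}'$ satisfies $\rho(r)\subseteq\mathrm{cl}_{\mathcal{R}'}(F)$ and there is $x\in\mathrm{cl}_{\mathcal{R}'}(F)$ with $(x,r)\in C$. A union of RAFs is an RAF; for $\mathcal{R}^*\subseteq\mathcal{R}$, $s(\mathcal{R}^* )$ denotes the unique maximal RAF contained in $\mathcal{R}^*$ (the union of all RAFs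 contained in $\mathcal{R}^*$), or $\emptyset$ if $\mathcal{R}^*$ contains no RAF. The support of a reaction is ${\rm supp}(r)=\rho(r)\cup\pi(r)$, and ${\rm supp}(\mathcal{R}')=\bigcup_{r\in\mathcal{R}'}{\rm supp}(r)$. Inhibition pairs $(X_i,\mathcal{R}_i)$, $i\in[k]=\{1,\dots,k\}$, mean every molecule in $X_i$ inhibits every reaction in $\mathcal{R}_i$. A subset $\mathcal{R}'\subseteq\mathcal{R}$ is a $u$-RAF (uninhibited RAF) if (u-1) $\mathcal{R}'$ is an RAF, and (u-2) for every $i\in[k]$, $\mathcal{R}'\cap\mathcal{R}_i\neq\emptyset$ implies ${\rm supp}(\mathcal{R}')\cap X_i=\emptyset$. For $J\subseteq[k]$: $\mathcal{R}^J=\{r\in\mathcal{R}: {\rm supp}(r)\cap X_j=\emptyset \text{ for all } j\notin J\}$ and $\mathcal{R}_J=\{r\in\mathcal{R}: r\notin\mathcal{R}_j\text{ for all } j\in J\}$. *)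

From mathcomp Require Import all_boot all_order.
Set Implicit Arguments. Unset Strict Implicit. Unset Printing Implicit Defensive.

Section CRS.
Variables (X Rxn : finType).
Variables (rho pi : Rxn -> {set X}) (C : {set X * Rxn}) (F : {set X}).

Definition closed_under (Rs0 : {set Rxn}) (W : {set X}) : bool :=
  (F \subset W) && [forall r in Rs0, (rho r \subset W) ==> (pi r \subset W)].

Definition cl (Rs0 : {set Rxn}) : {set X} :=
  \bigcap_(W : {set X} | closed_under Rs0 W) W.

Definition is_RAF (Rs0 : {set Rxn}) : bool :=
  (Rs0 != set0) &&
  [forall r in Rs0, (rho r \subset cl Rs0) &&
                   [exists x, (x \in cl Rs0) && ((x, r) \in C)]].

Definition maxRAF (Rs : {set Rxn}) : {set Rxn} :=
  \bigcup_(Rs0 : {set Rxn} | (Rs0 \subset Rs) && is_RAF Rs0) Rs0.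

Definition supp (r : Rxn) : {set X} := rho r :|: pi r.
Definition suppS (Rs0 : {set Rxn}) : {set X} := \bigcup_(r in Rs0) supp r.

Variables (k : nat) (Xi : 'I_k -> {set X}) (Ri : 'I_k -> {set Rxn}).

Definition is_uRAF (Rs0 : {set Rxn}) : bool :=
  is_RAF Rs0 &&
  [forall i : 'I_k, (Rs0 :&: Ri i != set0) ==> [disjoint suppS Rs0 & Xi i]].

Definition RupJ (J : {set 'I_k}) : {set Rxn} :=
  [set r | [forall j : 'I_k, (j \notin J) ==> [disjoint supp r & Xi j]]].
Definition RlowJ (J : {set 'I_k}) : {set Rxn} :=
  [set r | [forall j in J, r \notin Ri j]].

End CRS.

From mathcomp Require Import all_boot all_order.

(* The theorem splits along the two clauses of a u-RAF.
   (u-1) The maximal RAF s(Rs) of any reaction set Rs, when non-empty, is an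
   RAF: the closure cl_{R'}(F) grows with R', so each RAF R0 contained in
   s(Rs) keeps its reactants and a catalyst inside cl_{s(Rs)}(F).
   (u-2) Holds for EVERY set of reactions inside R^J ∩ R_J, whatever J: for an
   index i in J no reaction of R_J lies in R_i, so the premise is void; for
   i outside J every reaction of R^J has support disjoint from X_i, hence so
   does the union of supports.
   Since s(R^J ∩ R_J) is contained in R^J ∩ R_J, both clauses apply. *)

Section MaximalRAF.
Variables (X Rxn : finType) (rho pi : Rxn -> {set X}).
Variables (C : {set X * Rxn}) (F : {set X}).

(* The closure of the food set is monotone in the set of available reactions:
   a set closed under more reactions is closed under fewer. *)
Lemma cl_mono {R1 R2 : {set Rxn}} :
  R1 \subset R2 -> cl rho pi F R1 \subset cl rho pi F R2.
Proof.
move=> sR12; apply/bigcapsP => W /andP[FW /forallP closedW].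
apply: bigcap_inf; rewrite /closed_under FW /=.
apply/forallP => r; apply/implyP => rR1.
by apply: (implyP (closedW r)); apply: (subsetP sR12).
Qed.

Lemma maxRAF_sub (Rs : {set Rxn}) : maxRAF rho pi C F Rs \subset Rs.
Proof. by apply/bigcupsP => R0 /andP[]. Qed.

Lemma RAF_sub_maxRAF {Rs R0 : {set Rxn}} :
  R0 \subset Rs -> is_RAF rho pi C F R0 -> R0 \subset maxRAF rho pi C F Rs.
Proof. by move=> sR0 raf; apply: (bigcup_max R0) => //; rewrite sR0 raf. Qed.

Lemma maxRAF_is_RAF (Rs : {set Rxn}) :
  maxRAF rho pi C F Rs != set0 -> is_RAF rho pi C F (maxRAF rho pi C F Rs).
Proof.
move=> ne; rewrite /is_RAF ne /=; apply/forallP => r; apply/implyP.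
case/bigcupP=> R0 /andP[sR0 raf] rR0.
have sclR0 := cl_mono (RAF_sub_maxRAF sR0 raf).
case/andP: raf => _ /forallP /(_ r); rewrite rR0 /=.
case/andP=> reactR0 /existsP[x /andP[xcl xr]].
rewrite (subset_trans reactR0 sclR0) /=.
by apply/existsP; exists x; rewrite xr (subsetP sclR0).
Qed.

End MaximalRAF.

Section Inhibition.
Variables (X Rxn : finType) (rho pi : Rxn -> {set X}).
Variables (k : nat) (Xi : 'I_k -> {set X}) (Ri : 'I_k -> {set Rxn}).
Variable J : {set 'I_k}.

Lemma RlowJ_uninhibited {Rs0 : {set Rxn}} {i : 'I_k} :
  Rs0 \subset RlowJ Ri J -> i \in J -> Rs0 :&: Ri i = set0.
Proof.
move=> sRs0 iJ; apply/setP => r; rewrite !inE.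
apply/negbTE; apply/andP => -[/(subsetP sRs0)].
by rewrite inE => /forallP /(_ i); rewrite iJ /= => /negbTE ->.
Qed.

Lemma RupJ_supp_disjoint {Rs0 : {set Rxn}} {i : 'I_k} :
  Rs0 \subset RupJ rho pi Xi J -> i \notin J ->
  [disjoint suppS rho pi Rs0 & Xi i].
Proof.
move=> sRs0 iJ; rewrite disjoint_sym disjoint_subset.
apply/subsetP => x xXi; rewrite inE; apply/bigcupP => -[r rRs0 xr].
move: (subsetP sRs0 r rRs0); rewrite inE => /forallP /(_ i).
rewrite iJ /= => /pred0P /(_ x) /=.
by rewrite xr xXi.
Qed.

Lemma sub_RupJ_RlowJ_uninhibited (Rs0 : {set Rxn}) :
  Rs0 \subset RupJ rho pi Xi J :&: RlowJ Ri J ->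
  [forall i : 'I_k, (Rs0 :&: Ri i != set0) ==> [disjoint suppS rho pi Rs0 & Xi i]].
Proof.
rewrite subsetI => /andP[sUp sLow]; apply/forallP => i; apply/implyP => ne.
case: (boolP (i \in J)) => iJ; last exact: RupJ_supp_disjoint.
by rewrite (RlowJ_uninhibited sLow iJ) eqxx in ne.
Qed.

End Inhibition.

Theorem theorem1 (X Rxn : finType) (rho pi : Rxn -> {set X})
  (C : {set X * Rxn}) (F : {set X}) (k : nat)
  (Xi : 'I_k -> {set X}) (Ri : 'I_k -> {set Rxn}) (J : {set 'I_k}) :
  maxRAF rho pi C F (RupJ rho pi Xi J :&: RlowJ Ri J) != set0 ->
  is_uRAF rho pi C F Xi Ri (maxRAF rho pi C F (RupJ rho pi Xi J :&: RlowJ Ri J)).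
Proof.
move=> ne; rewrite /is_uRAF maxRAF_is_RAF //=.
exact/sub_RupJ_RlowJ_uninhibited/maxRAF_sub.
Qed.
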